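(* Let $\Phi_{CC}$ be a PCDS quantum channel on $\mathcal{H}_C=\mathcal{H}_A\oplus\mathcal{H}_B$, with diagonal blocks $\Phi_{AA}$ and $\Phi_{BB}$ (which are quantum channels on $\mathcal{H}_A$ and $\mathcal{H}_B$ respectively). Then $\Phi_{CC}$ is degradable if and only if both $\Phi_{AA}$ and $\Phi_{BB}$ are degradable.
   Context: All Hilbert spaces are finite-dimensional. $\mathcal{H}_C=\mathcal{H}_A\oplus\mathcal{H}_B$ with orthogonal projectors $\hat P_{AA},\hat P_{BB}$ onto the two nontrivial summands, and for an operator $\hat\Theta_{CC}$ on $\mathcal{H}_C$, $\hat\Theta_{XY}:=\hat P_{XX}\hat\Theta_{CC}\hat P_{YY}$. A quantum channel $\Phi_{CC}$ on $\mathcal{H}_C$ is PCDS if there are linear maps $\Phi_{AA},\Phi_{BB},\Phi^{(off)}_{AB},\Phi^{(off)}_{BA}$ (acting on operators $\mathcal{H}_A\to\mathcal{H}_A$, $\mathcal{H}_B\to\mathcal{H}_B$, $\mathcal{H}_B\to\mathcal{H}_A$, $\mathcal{H}_A\to\mathcal{H}_B$ respectively) with $\Phi_{CC}[\hat\Theta_{CC}]=\Phi_{AA}[\hat\Theta_{AA}]+\Phi_{BB}[\hat\Theta_{BB}]+\Phi^{(off)}_{AB}[\hat\Theta_{AB}]+\Phi^{(off)}_{BA}[\hat\Theta_{BA}]$ for all $\hat\Theta_{CC}$; equivalently, it has a Kraus set $\{\hat M^{(j)}_{CC}=\hat M^{(j)}_{AA}+\hat M^{(j)}_{BB}\}_j$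 of block-diagonal operators, and then $\Phi_{XX}[\cdot]=\sum_j\hat M^{(j)}_{XX}\cdot\hat M^{(j)\dagger}_{XX}$ for $X=A,B$. For a channel $\Phi_{XX}$ with Kraus set $\{\hat M^{(j)}\}_j$ and an orthonormal set $\{|j_E\rangle\}$ of an environment space $\mathcal{H}_E$, the complementary channel is $\tilde\Phi_{EX}[\hat\Theta]=\sum_{j,j'}|j_E\rangle\langle j'_E|\,\mathrm{Tr}[\hat M^{(j')\dagger}\hat M^{(j)}\hat\Theta]$ (defined up to a unitary on $E$). $\Phi_{XX}$ is degradable if there exists a quantum channel $\Lambda_{EX}$ from $X$ to $E$ with $\tilde\Phi_{EX}=\Lambda_{EX}\circ\Phi_{XX}$. *)

(* Finite-dimensional Hilbert spaces over the complex numbers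
   C = R[i] (R a real closed field of reals, R : realType); an operator on a
   d-dimensional space is a matrix 'M[R[i]]_d, an operator from an n-dim to an
   m-dim space is 'M[R[i]]_(m, n). *)
From HB Require Import structures.
From mathcomp Require Import all_boot all_order all_algebra.
From mathcomp Require Import complex.
From mathcomp Require Import reals.
Set Implicit Arguments.
Unset Strict Implicit.
Unset Printing Implicit Defensive.
Import Order.TTheory GRing.Theory Num.Theory.
Local Open Scope ring_scope.

Section QDefs.
Variable R : realType.
Local Notation C := R[i].

Definition adjmx (m n : nat) (A : 'M[C]_(m, n)) : 'M[C]_(n, m) :=
  (map_mx Num.conj A)^T.

Definition is_kraus (m n r : nat) (K : 'I_r -> 'M[C]_(m, n)) : Prop :=
  \sum_(j < r) adjmx (K j) *m K j = 1%:M.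

Definition kraus_map (m n r : nat) (K : 'I_r -> 'M[C]_(m, n))
  (X : 'M[C]_n) : 'M[C]_m :=
  \sum_(j < r) (K j *m X *m adjmx (K j)).

Definition kraus_of (m n r : nat) (Phi : 'M[C]_n -> 'M[C]_m)
  (K : 'I_r -> 'M[C]_(m, n)) : Prop :=
  is_kraus K /\ forall X, Phi X = kraus_map K X.

(* Quantum channel (CPTP map) from an n-dim to an m-dim space, in Kraus form
   (finite-dimensional Kraus/Choi representation theorem). *)
Definition quantum_channel (m n : nat) (Phi : 'M[C]_n -> 'M[C]_m) : Prop :=
  exists r (K : 'I_r -> 'M[C]_(m, n)), kraus_of Phi K.

(* Complementary channel associated to the Kraus set K, with orthonormal
   basis {|j_E>}_{j<r} of the environment:
   tilde Phi[Theta] = sum_{j,j'} |j_E><j'_E| Tr[K_{j'}^dag K_j Theta]. *)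
Definition complementary (m n r : nat) (K : 'I_r -> 'M[C]_(m, n))
  (Theta : 'M[C]_n) : 'M[C]_r :=
  \matrix_(j < r, j' < r) \tr (adjmx (K j') *m K j *m Theta).

(* Degradability of a channel Phi on an n-dim space X: for a Kraus set K of
   Phi, there is a quantum channel Lambda from X to E with
   tilde Phi = Lambda o Phi.  (The property does not depend on the chosen
   Kraus set; we quantify existentially.) *)
Definition degradable (n : nat) (Phi : 'M[C]_n -> 'M[C]_n) : Prop :=
  exists r (K : 'I_r -> 'M[C]_n),
    kraus_of Phi K /\
    exists Lambda : 'M[C]_n -> 'M[C]_r,
      quantum_channel Lambda /\
      forall Theta, complementary K Theta = Lambda (Phi Theta).

Definition is_linear_map (m1 n1 m2 n2 : nat)
  (f : 'M[C]_(m1, n1) -> 'M[C]_(m2, n2)) : Prop :=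
  forall (c : C) x y, f (c *: x + y) = c *: f x + f y.

(* PCDS: H_C = H_A (+) H_B with dim H_A = a, dim H_B = b; the first a basis
   vectors span H_A.  Theta_XY = P_XX Theta P_YY is identified with the
   corresponding block of Theta, embedded back into H_C with zeros elsewhere. *)
Definition PCDS_decomp (a b : nat) (Phi : 'M[C]_(a + b) -> 'M[C]_(a + b))
  (PhiAA : 'M[C]_a -> 'M[C]_a) (PhiBB : 'M[C]_b -> 'M[C]_b)
  (PhiAB : 'M[C]_(a, b) -> 'M[C]_(a, b))
  (PhiBA : 'M[C]_(b, a) -> 'M[C]_(b, a)) : Prop :=
  forall Theta : 'M[C]_(a + b),
    Phi Theta =
      block_mx (PhiAA (ulsubmx Theta)) 0 0 0
    + block_mx 0 0 0 (PhiBB (drsubmx Theta))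
    + block_mx 0 (PhiAB (ursubmx Theta)) 0 0
    + block_mx 0 0 (PhiBA (dlsubmx Theta)) 0.

End QDefs.

(* The Kraus operators M_j of a PCDS channel are block diagonal: the B-block
   of Phi[P_AA] is Phi_BB[0] = 0, and it is the sum of the positive terms
   (M_j)_BA (M_j)_BA^dag, so every (M_j)_BA vanishes, and likewise every
   (M_j)_AB.  Compressing the Kraus operators to H_A, and a degrading map
   Lambda of Phi to Y |-> Lambda[Y (+) 0], shows that Phi_AA is degradable;
   similarly for Phi_BB.  Conversely, for block-diagonal Kraus operators the
   complementary channel of Phi at Theta is the sum of the complementary
   channels of the compressed Kraus sets at Theta_AA and Theta_BB, so
   degrading maps of Phi_AA and Phi_BB, applied to the two diagonal blocks of
   the output, add up to a degrading map of Phi.  This requires degradability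
   not to depend on the Kraus set: two Kraus sets of the same channel have
   vectorizations with the same Gram matrix, hence are related by a partial
   isometry A, and conjugation by A, completed to a channel, carries one
   complementary channel to the other. *)

From HB Require Import structures.
From mathcomp Require Import all_boot all_order all_algebra.
From mathcomp Require Import complex reals mxtens.
Set Implicit Arguments.
Unset Strict Implicit.
Unset Printing Implicit Defensive.
Import GRing.Theory Num.Theory.
Local Open Scope ring_scope.

Section Degradability.
Variable R : realType.
Local Notation C := R[i].

Lemma adjmxM m n p (A : 'M[C]_(m, n)) (B : 'M[C]_(n, p)) :
  adjmx (A *m B) = adjmx B *m adjmx A.
Proof. by rewrite /adjmx map_mxM trmx_mul. Qed.

Lemma adjmxK m n (A : 'M[C]_(m, n)) : adjmx (adjmx A) = A.
Proof. by apply/matrixP=> i j; rewrite !mxE conjCK. Qed.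

Lemma adjmxB m n (A B : 'M[C]_(m, n)) : adjmx (A - B) = adjmx A - adjmx B.
Proof. by apply/matrixP=> i j; rewrite !mxE rmorphB. Qed.

Lemma adjmx0 m n : adjmx (0 : 'M[C]_(m, n)) = 0.
Proof. by apply/matrixP=> i j; rewrite !mxE rmorph0. Qed.

Lemma adjmx1 n : adjmx (1%:M : 'M[C]_n) = 1%:M.
Proof. by rewrite /adjmx map_mx1 trmx1. Qed.

Lemma adjmx_delta m n (i : 'I_m) (j : 'I_n) :
  adjmx (delta_mx i j : 'M[C]_(m, n)) = delta_mx j i.
Proof. by rewrite /adjmx map_delta_mx trmx_delta. Qed.

Lemma adjmx_col m1 m2 n (A : 'M[C]_(m1, n)) (B : 'M[C]_(m2, n)) :
  adjmx (col_mx A B) = row_mx (adjmx A) (adjmx B).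
Proof. by rewrite /adjmx map_col_mx tr_col_mx. Qed.

Lemma sum_mulmx_adj_eq0 m n r (M : 'I_r -> 'M[C]_(m, n)) :
  \sum_j M j *m adjmx (M j) = 0 -> forall j, M j = 0.
Proof.
move=> M0 j; apply/matrixP=> x y; rewrite mxE.
have /matrixP /(_ x x) := M0; rewrite summxE mxE.
under eq_bigr => k _ do rewrite mxE.
move/eqP; rewrite psumr_eq0 => [/allP /(_ j (mem_index_enum _)) | k _]; last first.
  by apply: sumr_ge0 => l _; rewrite !mxE mul_conjC_ge0.
rewrite /= psumr_eq0 => [/allP /(_ y (mem_index_enum _)) | l _]; last first.
  by rewrite !mxE mul_conjC_ge0.
by rewrite /= !mxE mul_conjC_eq0 => /eqP.
Qed.

Lemma mulmx_adj_eq0 m n (M : 'M[C]_(m, n)) : M *m adjmx M = 0 -> M = 0.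
Proof.
move=> M0; apply: (@sum_mulmx_adj_eq0 m n 1 (fun _ => M)) ord0.
by rewrite big_ord1.
Qed.

Lemma kraus_size_gt0 m n r (K : 'I_r -> 'M[C]_(m, n)) :
  (0 < n)%N -> is_kraus K -> (0 < r)%N.
Proof.
case: n K => // n K _; case: r K => // K; rewrite /is_kraus big_ord0.
by move/matrixP/(_ ord0 ord0); rewrite !mxE eqxx => /eqP; rewrite eq_sym oner_eq0.
Qed.

Lemma big_mxtens (Z : nmodType) m n (F : 'I_(m * n) -> Z) :
  \sum_k F k = \sum_i \sum_j F (mxtens_index (i, j)).
Proof.
rewrite pair_big (reindex (@mxtens_index m n)) /=; last first.
  by exists (@mxtens_unindex m n) => k _; rewrite (mxtens_indexK, mxtens_unindexK).
by apply: eq_bigr => -[i j].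
Qed.

Lemma quantum_channel_comp m n p (L1 : 'M[C]_n -> 'M[C]_m)
    (L2 : 'M[C]_m -> 'M[C]_p) :
  quantum_channel L1 -> quantum_channel L2 -> quantum_channel (L2 \o L1).
Proof.
move=> [r1 [K1 [K1_tp L1E]]] [r2 [K2 [K2_tp L2E]]].
exists (r2 * r1)%N, (fun k => K2 (mxtens_unindex k).1 *m K1 (mxtens_unindex k).2).
split.
  rewrite /is_kraus big_mxtens exchange_big -K1_tp; apply: eq_bigr => j _.
  rewrite -[X in _ = X *m _]mulmx1 -K2_tp mulmx_sumr mulmx_suml.
  by apply: eq_bigr => i _; rewrite mxtens_indexK adjmxM !mulmxA.
move=> X; rewrite /comp L1E L2E /kraus_map big_mxtens; apply: eq_bigr => i _.
rewrite mulmx_sumr mulmx_suml; apply: eq_bigr => j _.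
by rewrite mxtens_indexK adjmxM !mulmxA.
Qed.

Lemma channel_compression n m p (V : 'M[C]_(n, m)) (Lam : 'M[C]_n -> 'M[C]_p) :
  adjmx V *m V = 1%:M ->
  quantum_channel Lam -> quantum_channel (fun Y => Lam (V *m Y *m adjmx V)).
Proof.
move=> V_iso [r [L [L_tp LE]]]; exists r, (fun l => L l *m V); split.
  rewrite /is_kraus -V_iso -[adjmx V in RHS]mulmx1 -L_tp mulmx_sumr mulmx_suml.
  by apply: eq_bigr => l _; rewrite adjmxM !mulmxA.
by move=> Y; rewrite LE; apply: eq_bigr => l _; rewrite adjmxM !mulmxA.
Qed.

Lemma channel_sum_compression n m1 m2 p (V1 : 'M[C]_(n, m1))
    (V2 : 'M[C]_(n, m2)) (L1 : 'M[C]_m1 -> 'M[C]_p) (L2 : 'M[C]_m2 -> 'M[C]_p) :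
  V1 *m adjmx V1 + V2 *m adjmx V2 = 1%:M ->
  quantum_channel L1 -> quantum_channel L2 ->
  quantum_channel (fun Y => L1 (adjmx V1 *m Y *m V1) + L2 (adjmx V2 *m Y *m V2)).
Proof.
move=> V_complete [t1 [K1 [K1_tp L1E]]] [t2 [K2 [K2_tp L2E]]].
pose K (i : 'I_(t1 + t2)) :=
  match split i with inl l => K1 l *m adjmx V1 | inr l => K2 l *m adjmx V2 end.
have KL l : K (lshift t2 l) = K1 l *m adjmx V1 by rewrite /K (unsplitK (inl _)).
have KR l : K (rshift t1 l) = K2 l *m adjmx V2 by rewrite /K (unsplitK (inr _)).
have conj_sum t (L : 'I_t -> 'M[C]_(p, _)) (V : 'M[C]_(n, _)) :
    \sum_l adjmx (L l *m adjmx V) *m (L l *m adjmx V)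
    = V *m (\sum_l adjmx (L l) *m L l) *m adjmx V.
  rewrite mulmx_sumr mulmx_suml; apply: eq_bigr => l _.
  by rewrite adjmxM adjmxK !mulmxA.
exists (t1 + t2)%N, K; split.
  rewrite /is_kraus big_split_ord /=.
  under eq_bigr => l _ do rewrite KL.
  under [X in _ + X = _]eq_bigr => l _ do rewrite KR.
  by rewrite !conj_sum K1_tp K2_tp !mulmx1.
move=> Y; rewrite L1E L2E /kraus_map big_split_ord /=; congr (_ + _).
  by apply: eq_bigr => l _; rewrite KL adjmxM adjmxK !mulmxA.
by apply: eq_bigr => l _; rewrite KR adjmxM adjmxK !mulmxA.
Qed.

(** * Independence of degradability from the Kraus set *)

Lemma hermitian_ginv n (J : 'M[C]_n) : adjmx J = J ->
  exists2 Jp : 'M[C]_n, adjmx Jp = Jp & J *m Jp *m J = J.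
Proof.
move=> J_herm; have [B JBJ] : exists B, J *m B *m J = J.
  by exists (pinvmx J); rewrite mulmxKpV.
have JadjBJ : J *m adjmx B *m J = J.
  by have := congr1 (@adjmx R n n) JBJ; rewrite !adjmxM J_herm mulmxA.
exists (B *m J *m adjmx B); first by rewrite !adjmxM adjmxK J_herm mulmxA.
by rewrite !mulmxA JBJ.
Qed.

Lemma mulmx_ginv_gram r n (F : 'M[C]_(r, n)) (Jp : 'M[C]_n) :
  adjmx F *m F *m Jp *m (adjmx F *m F) = adjmx F *m F ->
  F *m Jp *m (adjmx F *m F) = F.
Proof.
set J := adjmx F *m F => JJpJ; set D := 1%:M - Jp *m J.
have JD0 : J *m D = 0 by rewrite mulmxBr mulmx1 mulmxA JJpJ subrr.
have FD0 : adjmx (F *m D) = 0.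
  apply: mulmx_adj_eq0; rewrite adjmxK adjmxM -mulmxA (mulmxA (adjmx F)).
  by rewrite JD0 mulmx0.
have /eqP : F *m D = 0 by rewrite -[F *m D]adjmxK FD0 adjmx0.
by rewrite mulmxBr mulmx1 mulmxA subr_eq0 => /eqP.
Qed.

Definition isometry_defect m n (A : 'M[C]_(m, n)) : 'M[C]_n :=
  1%:M - adjmx A *m A.

Lemma gram_eq_partial_isometry r1 r2 n (F : 'M[C]_(r1, n)) (G : 'M[C]_(r2, n)) :
  adjmx F *m F = adjmx G *m G ->
  exists A : 'M[C]_(r2, r1),
  [/\ A *m F = G,
      adjmx (isometry_defect A) *m isometry_defect A = isometry_defect A
    & isometry_defect A *m F = 0].
Proof.
move=> FG; set J := adjmx F *m F.
have J_herm : adjmx J = J by rewrite adjmxM adjmxK.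
have [Jp Jp_herm JJpJ] := hermitian_ginv J_herm.
have FJpJ : F *m Jp *m J = F by exact: mulmx_ginv_gram.
have GJpJ : G *m Jp *m J = G.
  by rewrite /J FG; apply: mulmx_ginv_gram; rewrite -FG.
set Q := F *m Jp *m adjmx F.
have QQ : Q *m Q = Q by rewrite /Q !mulmxA -(mulmxA _ _ F) FJpJ.
have AA : adjmx (G *m Jp *m adjmx F) *m (G *m Jp *m adjmx F) = Q.
  rewrite !adjmxM adjmxK Jp_herm !mulmxA -(mulmxA _ (adjmx G)) -FG.
  by rewrite FJpJ.
exists (G *m Jp *m adjmx F); rewrite /isometry_defect AA; split.
- by rewrite -mulmxA GJpJ.
- rewrite adjmxB adjmx1 /Q !adjmxM adjmxK Jp_herm mulmxA -/Q.
  by rewrite mulmxBl mul1mx mulmxBr mulmx1 QQ subrr subr0.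
- by rewrite mulmxBl mul1mx /Q -[_ *m adjmx F *m F]mulmxA -/J FJpJ subrr.
Qed.

(* The rows of the defect complete [A] to a trace-preserving Kraus set. *)
Lemma partial_isometry_channel r1 r2 (A : 'M[C]_(r2, r1)) : (0 < r2)%N ->
  adjmx (isometry_defect A) *m isometry_defect A = isometry_defect A ->
  exists2 Lam : 'M[C]_r1 -> 'M[C]_r2, quantum_channel Lam &
    forall Y, isometry_defect A *m Y = 0 -> Lam Y = A *m Y *m adjmx A.
Proof.
move=> r2_gt0; set P := isometry_defect A => P_proj; pose k0 := Ordinal r2_gt0.
pose K (i : 'I_(1 + r1)) :=
  match split i with inl _ => A | inr l => delta_mx k0 l *m P end.
have K0 : K (lshift r1 ord0) = A by rewrite /K (unsplitK (inl _)).
have KS l : K (rshift 1 l) = delta_mx k0 l *m P by rewrite /K (unsplitK (inr _)).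
exists (kraus_map K).
  exists (1 + r1)%N, K; split => //.
  rewrite /is_kraus big_split_ord /= big_ord1 K0.
  under eq_bigr => l _ do rewrite KS adjmxM adjmx_delta mulmxA
    -(mulmxA _ (delta_mx l k0)) mul_delta_mx.
  rewrite -mulmx_suml -mulmx_sumr -mx1_sum_delta mulmx1 P_proj.
  by rewrite /P /isometry_defect addrC subrK.
move=> Y PY0; rewrite /kraus_map big_split_ord /= big_ord1 K0 big1 ?addr0 // => l _.
by rewrite KS adjmxM -!mulmxA (mulmxA P) PY0 !mul0mx mulmx0.
Qed.

Definition vec_kraus n r (K : 'I_r -> 'M[C]_n) : 'M[C]_(r, n * n) :=
  \matrix_(j, k) K j (mxtens_unindex k).1 (mxtens_unindex k).2.

Lemma vec_krausE n r (K : 'I_r -> 'M[C]_n) j x u :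
  vec_kraus K j (mxtens_index (x, u)) = K j x u.
Proof. by rewrite mxE mxtens_indexK. Qed.

Lemma kraus_map_deltaE n r (K : 'I_r -> 'M[C]_n) v u y x :
  kraus_map K (delta_mx v u) y x = \sum_j K j y v * (K j x u)^*.
Proof.
rewrite summxE; apply: eq_bigr => j _.
rewrite mxE (bigD1 u) //= big1 ?addr0 => [|w /negPf uw]; last first.
  rewrite mxE big1 ?mul0r // => l _.
  by rewrite mxE uw andbF mulr0.
rewrite !mxE (bigD1 v) //= big1 ?addr0 => [|l /negPf lv]; last first.
  by rewrite mxE lv mulr0.
by rewrite !mxE !eqxx mulr1.
Qed.

(* The Gram matrix is the Choi matrix of [kraus_map P], up to reindexing. *)
Lemma gram_vec_kraus n r1 r2 (P : 'I_r1 -> 'M[C]_n) (Q : 'I_r2 -> 'M[C]_n) :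
  kraus_map P =1 kraus_map Q ->
  adjmx (vec_kraus P) *m vec_kraus P = adjmx (vec_kraus Q) *m vec_kraus Q.
Proof.
move=> PQ; apply/matrixP => k l.
case: (mxtens_indexP k) => x u; case: (mxtens_indexP l) => y v.
have := congr1 (fun M : 'M[C]_n => M y x) (PQ (delta_mx v u)).
rewrite /= !kraus_map_deltaE !mxE => PQyx.
under eq_bigr => j _ do rewrite !mxE !mxtens_indexK mulrC.
by rewrite PQyx; apply: eq_bigr => j _; rewrite !mxE !mxtens_indexK mulrC.
Qed.

Lemma complementary_vec_kraus n r (K : 'I_r -> 'M[C]_n) X :
  complementary K X = vec_kraus K *m (1%:M *t X) *m adjmx (vec_kraus K).
Proof.
apply/matrixP => j j'; rewrite mxE mxtrace_mulC mulmxA mxtrace_mulC !mulmxA.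
rewrite mxE big_mxtens; apply: eq_bigr => y _; rewrite mxE; apply: eq_bigr => u _.
rewrite [adjmx (K j') _ _]mxE [adjmx (vec_kraus K) _ _]mxE.
congr (_ * _); last by rewrite !mxE mxtens_indexK.
rewrite [RHS]mxE big_mxtens.
under eq_bigr => x _ do under eq_bigr => w _ do rewrite tensmxE vec_krausE mxE.
rewrite (bigD1 y) //= [X in _ + X]big1 ?addr0 => [|x /negPf xy]; last first.
  by apply: big1 => w _; rewrite xy mul0r mulr0.
by rewrite mxE; apply: eq_bigr => w _; rewrite eqxx mul1r.
Qed.

Lemma degrading_channel_kraus_invariant n r1 r2 (Phi : 'M[C]_n -> 'M[C]_n)
    (P : 'I_r1 -> 'M[C]_n) (Q : 'I_r2 -> 'M[C]_n) (Lam : 'M[C]_n -> 'M[C]_r1) :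
  (0 < r2)%N -> kraus_of Phi P -> kraus_of Phi Q -> quantum_channel Lam ->
  (forall X, complementary P X = Lam (Phi X)) ->
  exists2 Lam' : 'M[C]_n -> 'M[C]_r2, quantum_channel Lam' &
    forall X, complementary Q X = Lam' (Phi X).
Proof.
move=> r2_gt0 [_ PhiP] [_ PhiQ] Lam_ch P_deg.
have PQ : kraus_map P =1 kraus_map Q by move=> X; rewrite -PhiP -PhiQ.
have [A [AP D_proj DP]] := gram_eq_partial_isometry (gram_vec_kraus PQ).
have [L L_ch LE] := partial_isometry_channel r2_gt0 D_proj.
exists (L \o Lam); first exact: quantum_channel_comp.
move=> X /=; rewrite -P_deg LE; last first.
  by rewrite complementary_vec_kraus !mulmxA DP !mul0mx.
by rewrite !complementary_vec_kraus -AP !adjmxM !mulmxA.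
Qed.

(** * Compression to an orthogonal summand *)

Lemma mulmx_compression n m k (V : 'M[C]_(n, m)) (W : 'M[C]_(n, k)) (K : 'M[C]_n) :
  V *m adjmx V + W *m adjmx W = 1%:M -> adjmx W *m K *m V = 0 ->
  K *m V = V *m (adjmx V *m K *m V).
Proof.
move=> VW_complete WKV_0; rewrite -{1}(mul1mx (K *m V)) -VW_complete mulmxDl.
by rewrite -!mulmxA (mulmxA (adjmx W)) WKV_0 mulmx0 addr0 !mulmxA.
Qed.

Lemma mxtrace_compression n m k (V : 'M[C]_(n, m)) (W : 'M[C]_(n, k))
    (K K' Th : 'M[C]_n) :
  V *m adjmx V + W *m adjmx W = 1%:M ->
  adjmx W *m K *m V = 0 -> adjmx V *m K' *m W = 0 ->
  \tr (adjmx K' *m K *m (V *m adjmx V *m Th))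
  = \tr (adjmx (adjmx V *m K' *m V) *m (adjmx V *m K *m V) *m (adjmx V *m Th *m V)).
Proof.
move=> VW_complete WKV_0 VK'W_0.
have WK'V_0 : adjmx W *m adjmx K' *m V = 0.
  by rewrite -[V]adjmxK -!adjmxM mulmxA VK'W_0 adjmx0.
rewrite !mulmxA -(mulmxA (adjmx K') K V) (mulmx_compression VW_complete WKV_0).
rewrite !mulmxA (mulmx_compression VW_complete WK'V_0) -!mulmxA mxtrace_mulC.
by rewrite !adjmxM adjmxK !mulmxA.
Qed.

(* [W^dag Phi[V V^dag] W] is the sum of the positive terms
   [(W^dag K_j V) (W^dag K_j V)^dag]. *)
Lemma kraus_offdiag_eq0 n m k (V : 'M[C]_(n, m)) (W : 'M[C]_(n, k))
    (Phi : 'M[C]_n -> 'M[C]_n) (PsiW : 'M[C]_k -> 'M[C]_k) r (K : 'I_r -> 'M[C]_n) :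
  kraus_of Phi K -> adjmx W *m V = 0 ->
  (forall Th, adjmx W *m Phi Th *m W = PsiW (adjmx W *m Th *m W)) -> PsiW 0 = 0 ->
  forall j, adjmx W *m K j *m V = 0.
Proof.
move=> [_ PhiE] WV_0 PhiW PsiW0; apply: sum_mulmx_adj_eq0.
have := PhiW (V *m adjmx V); rewrite mulmxA WV_0 !mul0mx PsiW0 PhiE /kraus_map.
rewrite mulmx_sumr mulmx_suml => E; rewrite -[RHS]E; apply: eq_bigr => j _.
by rewrite !adjmxM adjmxK !mulmxA.
Qed.

Section Compression.
Variables (n m k : nat) (V : 'M[C]_(n, m)) (W : 'M[C]_(n, k)).
Hypotheses (V_isometry : adjmx V *m V = 1%:M) (WV_0 : adjmx W *m V = 0)
  (VW_complete : V *m adjmx V + W *m adjmx W = 1%:M).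
Variables (Phi : 'M[C]_n -> 'M[C]_n) (PsiV : 'M[C]_m -> 'M[C]_m)
  (PsiW : 'M[C]_k -> 'M[C]_k).
Hypotheses (PhiV : forall Th, adjmx V *m Phi Th *m V = PsiV (adjmx V *m Th *m V))
  (PhiW : forall Th, adjmx W *m Phi Th *m W = PsiW (adjmx W *m Th *m W))
  (PsiW0 : PsiW 0 = 0).
Variables (r : nat) (K : 'I_r -> 'M[C]_n).
Hypothesis K_Phi : kraus_of Phi K.

Let K_mulV j : K j *m V = V *m (adjmx V *m K j *m V).
Proof. exact/mulmx_compression/(kraus_offdiag_eq0 K_Phi WV_0 PhiW PsiW0). Qed.

Let compression_gram j j' :
  adjmx (adjmx V *m K j' *m V) *m (adjmx V *m K j *m V)
  = adjmx V *m (adjmx (K j') *m K j) *m V.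
Proof.
by rewrite !adjmxM adjmxK -mulmxA -(mulmxA (adjmx (K j'))) -K_mulV !mulmxA.
Qed.

Lemma kraus_of_compression : kraus_of PsiV (fun j => adjmx V *m K j *m V).
Proof.
case: K_Phi => K_tp PhiE; split.
  rewrite /is_kraus -V_isometry -[adjmx V in RHS]mulmx1 -K_tp.
  rewrite mulmx_sumr mulmx_suml; apply: eq_bigr => j _.
  by rewrite compression_gram.
move=> X; transitivity (PsiV (adjmx V *m (V *m X *m adjmx V) *m V)).
  by rewrite !mulmxA V_isometry mul1mx -mulmxA V_isometry mulmx1.
rewrite -PhiV PhiE /kraus_map mulmx_sumr mulmx_suml; apply: eq_bigr => j _.
by rewrite !adjmxM adjmxK !mulmxA.
Qed.

Lemma Phi_conj_isometry X : Phi (V *m X *m adjmx V) = V *m PsiV X *m adjmx V.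
Proof.
case: K_Phi => _ PhiE; rewrite PhiE (kraus_of_compression.2 X) /kraus_map.
rewrite mulmx_sumr mulmx_suml; apply: eq_bigr => j _.
have -> : K j *m (V *m X *m adjmx V) *m adjmx (K j)
    = K j *m V *m X *m adjmx (K j *m V) by rewrite adjmxM !mulmxA.
by rewrite K_mulV !adjmxM !mulmxA.
Qed.

Lemma complementary_compression X :
  complementary (fun j => adjmx V *m K j *m V) X
  = complementary K (V *m X *m adjmx V).
Proof.
apply/matrixP => j j'; rewrite !mxE compression_gram -!mulmxA mxtrace_mulC.
by rewrite !mulmxA.
Qed.

Lemma degradable_compression :
  (exists2 Lam : 'M[C]_n -> 'M[C]_r, quantum_channel Lam &
     forall Th, complementary K Th = Lam (Phi Th)) ->
  degradable PsiV.
Proof.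
move=> [Lam Lam_ch K_deg]; exists r, (fun j => adjmx V *m K j *m V).
split; first exact: kraus_of_compression.
exists (fun Y => Lam (V *m Y *m adjmx V)); split.
  exact: channel_compression V_isometry Lam_ch.
by move=> X; rewrite complementary_compression K_deg Phi_conj_isometry.
Qed.

End Compression.

Section OrthogonalSplitting.
Variables (n m1 m2 : nat) (V1 : 'M[C]_(n, m1)) (V2 : 'M[C]_(n, m2)).
Hypotheses (V1_isometry : adjmx V1 *m V1 = 1%:M)
  (V2_isometry : adjmx V2 *m V2 = 1%:M) (V21_0 : adjmx V2 *m V1 = 0)
  (V_complete : V1 *m adjmx V1 + V2 *m adjmx V2 = 1%:M).
Variables (Phi : 'M[C]_n -> 'M[C]_n) (Psi1 : 'M[C]_m1 -> 'M[C]_m1)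
  (Psi2 : 'M[C]_m2 -> 'M[C]_m2).
Hypotheses
  (Phi1 : forall Th, adjmx V1 *m Phi Th *m V1 = Psi1 (adjmx V1 *m Th *m V1))
  (Phi2 : forall Th, adjmx V2 *m Phi Th *m V2 = Psi2 (adjmx V2 *m Th *m V2))
  (Psi1_0 : Psi1 0 = 0) (Psi2_0 : Psi2 0 = 0).

Let V12_0 : adjmx V1 *m V2 = 0.
Proof. by rewrite -[V2]adjmxK -adjmxM V21_0 adjmx0. Qed.

Let V_complete_sym : V2 *m adjmx V2 + V1 *m adjmx V1 = 1%:M.
Proof. by rewrite addrC. Qed.

Lemma complementary_split r (K : 'I_r -> 'M[C]_n) Th : kraus_of Phi K ->
  complementary K Th
  = complementary (fun j => adjmx V1 *m K j *m V1) (adjmx V1 *m Th *m V1)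
  + complementary (fun j => adjmx V2 *m K j *m V2) (adjmx V2 *m Th *m V2).
Proof.
move=> K_Phi; have K21 := kraus_offdiag_eq0 K_Phi V21_0 Phi2 Psi2_0.
have K12 := kraus_offdiag_eq0 K_Phi V12_0 Phi1 Psi1_0.
apply/matrixP => j j'; rewrite !mxE -[Th in LHS]mul1mx -V_complete mulmxDl mulmxDr.
rewrite mxtraceD (mxtrace_compression _ V_complete) //.
by rewrite (mxtrace_compression _ V_complete_sym).
Qed.

Theorem degradable_split : (0 < n)%N -> quantum_channel Phi ->
  degradable Phi <-> degradable Psi1 /\ degradable Psi2.
Proof.
move=> n_gt0 [r [M M_Phi]]; split.
  move=> [t [K [K_Phi [Lam [Lam_ch K_deg]]]]]; split.
    apply: (degradable_compression V1_isometry V21_0 V_complete Phi1 Phi2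
      Psi2_0 K_Phi).
    by exists Lam.
  apply: (degradable_compression V2_isometry V12_0 V_complete_sym Phi2 Phi1
    Psi1_0 K_Phi).
  by exists Lam.
have r_gt0 : (0 < r)%N := kraus_size_gt0 n_gt0 M_Phi.1.
move=> [[t1 [P [P_Psi1 [L1 [L1_ch P_deg]]]]] [t2 [Q [Q_Psi2 [L2 [L2_ch Q_deg]]]]]].
have M1_Psi1 :=
  kraus_of_compression V1_isometry V21_0 V_complete Phi1 Phi2 Psi2_0 M_Phi.
have M2_Psi2 :=
  kraus_of_compression V2_isometry V12_0 V_complete_sym Phi2 Phi1 Psi1_0 M_Phi.
have [L1' L1'_ch M1_deg] :=
  degrading_channel_kraus_invariant r_gt0 P_Psi1 M1_Psi1 L1_ch P_deg.
have [L2' L2'_ch M2_deg] :=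
  degrading_channel_kraus_invariant r_gt0 Q_Psi2 M2_Psi2 L2_ch Q_deg.
exists r, M; split => //.
exists (fun Y => L1' (adjmx V1 *m Y *m V1) + L2' (adjmx V2 *m Y *m V2)); split.
  exact: channel_sum_compression.
by move=> Th; rewrite (complementary_split Th M_Phi) M1_deg M2_deg Phi1 Phi2.
Qed.

End OrthogonalSplitting.

(** * PCDS channels *)

Lemma linear_map0 m n (f : 'M[C]_(m, n) -> 'M[C]_(m, n)) :
  is_linear_map f -> f 0 = 0.
Proof.
move=> f_lin; have := f_lin 1 0 0; rewrite !scale1r addr0 => f0.
by apply: (addrI (f 0)); rewrite addr0 -f0.
Qed.

Definition lembed a b : 'M[C]_(a + b, a) := col_mx 1%:M 0.
Definition rembed a b : 'M[C]_(a + b, b) := col_mx 0 1%:M.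

Lemma lembed_compression a b (Th : 'M[C]_(a + b)) :
  adjmx (lembed a b) *m Th *m lembed a b = ulsubmx Th.
Proof.
rewrite /lembed adjmx_col adjmx1 adjmx0 -[Th in LHS]submxK mul_row_block.
by rewrite !mul1mx !mul0mx !addr0 mul_row_col mulmx1 mulmx0 addr0.
Qed.

Lemma rembed_compression a b (Th : 'M[C]_(a + b)) :
  adjmx (rembed a b) *m Th *m rembed a b = drsubmx Th.
Proof.
rewrite /rembed adjmx_col adjmx1 adjmx0 -[Th in LHS]submxK mul_row_block.
by rewrite !mul1mx !mul0mx !add0r mul_row_col mulmx1 mulmx0 add0r.
Qed.

Lemma lembed_isometry a b : adjmx (lembed a b) *m lembed a b = 1%:M.
Proof.
by rewrite -[adjmx _]mulmx1 lembed_compression (scalar_mx_block a b) block_mxKul.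
Qed.

Lemma rembed_isometry a b : adjmx (rembed a b) *m rembed a b = 1%:M.
Proof.
by rewrite -[adjmx _]mulmx1 rembed_compression (scalar_mx_block a b) block_mxKdr.
Qed.

Lemma rembed_lembed a b : adjmx (rembed a b) *m lembed a b = 0.
Proof.
by rewrite /rembed /lembed adjmx_col adjmx0 adjmx1 mul_row_col mul0mx mul1mx addr0.
Qed.

Lemma embed_complete a b :
  lembed a b *m adjmx (lembed a b) + rembed a b *m adjmx (rembed a b) = 1%:M.
Proof.
rewrite /lembed /rembed !adjmx_col !mul_col_row add_block_mx.
rewrite !adjmx0 !adjmx1 !(mulmx0, mul0mx, mulmx1, addr0, add0r).
by rewrite (scalar_mx_block a b).
Qed.

Lemma PCDS_ulsubmx a b (Phi : 'M[C]_(a + b) -> 'M[C]_(a + b))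
    PhiAA PhiBB PhiAB PhiBA :
  PCDS_decomp Phi PhiAA PhiBB PhiAB PhiBA ->
  forall Th, ulsubmx (Phi Th) = PhiAA (ulsubmx Th).
Proof.
by move=> PCDS Th; rewrite PCDS !add_block_mx block_mxKul !(addr0, add0r).
Qed.

Lemma PCDS_drsubmx a b (Phi : 'M[C]_(a + b) -> 'M[C]_(a + b))
    PhiAA PhiBB PhiAB PhiBA :
  PCDS_decomp Phi PhiAA PhiBB PhiAB PhiBA ->
  forall Th, drsubmx (Phi Th) = PhiBB (drsubmx Th).
Proof.
by move=> PCDS Th; rewrite PCDS !add_block_mx block_mxKdr !(addr0, add0r).
Qed.

End Degradability.

Theorem theorem2 (R : realType) (a b : nat) (Ha : (0 < a)%N) (Hb : (0 < b)%N)
  (Phi : 'M[R[i]]_(a + b) -> 'M[R[i]]_(a + b))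
  (PhiAA : 'M[R[i]]_a -> 'M[R[i]]_a) (PhiBB : 'M[R[i]]_b -> 'M[R[i]]_b)
  (PhiAB : 'M[R[i]]_(a, b) -> 'M[R[i]]_(a, b))
  (PhiBA : 'M[R[i]]_(b, a) -> 'M[R[i]]_(b, a)) :
  quantum_channel Phi ->
  is_linear_map PhiAA -> is_linear_map PhiBB ->
  is_linear_map PhiAB -> is_linear_map PhiBA ->
  PCDS_decomp Phi PhiAA PhiBB PhiAB PhiBA ->
  (degradable Phi <-> degradable PhiAA /\ degradable PhiBB).
Proof.
(* Neither the off-diagonal maps nor [0 < b] play any role. *)
move=> Phi_ch AA_lin BB_lin _ _ PCDS.
apply: (degradable_split (lembed_isometry R a b) (rembed_isometry R a b)
  (rembed_lembed R a b) (embed_complete R a b) _ _ (linear_map0 AA_lin)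
  (linear_map0 BB_lin) _ Phi_ch).
- by move=> Th; rewrite !lembed_compression (PCDS_ulsubmx PCDS).
- by move=> Th; rewrite !rembed_compression (PCDS_drsubmx PCDS).
- by rewrite addn_gt0 Ha.
Qed.
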